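(* Let $n\ge1$ and let $f:\mathbb{R}^n\to[0,\infty)$ be an isotropic function. Let $x\in\mathbb{R}^n$, $v>0$, and define $g(y)=f(y)\exp\left(-\frac{|x-y|^2}{2v}\right)$ for $y\in\mathbb{R}^n$ (an integrable function). Suppose $X$ is a random vector in $\mathbb{R}^n$ whose density is proportional to $g$. Then (i) $\mathbb{E}|X-x|^2\le n+|x|^2$; (ii) $|\mathbb{E}X-x|\le\sqrt n+|x|$.
   Context: A function $f:\mathbb{R}^n\to[0,\infty)$ is isotropic if it is the probability density of a random vector in $\mathbb{R}^n$ with zero mean and identity covariance matrix. $|\cdot|$ is the Euclidean norm. *)

From HB Require Import structures.
From mathcomp Require Import all_boot all_order all_algebra.
From mathcomp Require Import all_classical all_reals all_analysis.
Set Implicit Arguments. Unset Strict Implicit. Unset Printing Implicit Defensive.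
Import Order.TTheory GRing.Theory Num.Theory.
Local Open Scope classical_set_scope.
Local Open Scope ring_scope.

(* Vectors of R^n are represented as n.-tuple R, which MathComp-Analysis
   equips with the product (= Borel) sigma-algebra. *)

Definition vsub (R : realType) (n : nat) (x y : n.-tuple R) : n.-tuple R :=
  mktuple (fun i => tnth x i - tnth y i).

Definition sqnorm (R : realType) (n : nat) (x : n.-tuple R) : R :=
  \sum_(i < n) tnth x i ^+ 2.

Definition enorm (R : realType) (n : nat) (x : n.-tuple R) : R :=
  Num.sqrt (sqnorm x).

(* mu is the Lebesgue measure on (the Borel sets of) R^n: the (unique)
   measure giving every box ]a,b] its volume prod_i (b_i - a_i)^+. *)
Definition is_lebesgue_measure (R : realType) (n : nat)
  (mu : {measure set (n.-tuple R) -> \bar R}) : Prop :=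
  forall a b : n.-tuple R,
    mu [set y | forall i, tnth a i < tnth y i <= tnth b i] =
    (\prod_(i < n) Num.max (tnth b i - tnth a i) 0)%:E.

(* f is isotropic: the probability density (w.r.t. mu) of a random vector
   with zero mean and identity covariance matrix. *)
Definition isotropic (R : realType) (n : nat)
  (mu : {measure set (n.-tuple R) -> \bar R}) (f : n.-tuple R -> R) : Prop :=
  [/\ measurable_fun setT f,
      (forall y, 0 <= f y),
      (\int[mu]_y (f y)%:E = 1)%E,
      (forall i : 'I_n, mu.-integrable setT (fun y => (tnth y i * f y)%:E) /\
         (\int[mu]_y (tnth y i * f y)%:E = 0)%E) &
      (forall i j : 'I_n,
         mu.-integrable setT (fun y => (tnth y i * tnth y j * f y)%:E) /\
         (\int[mu]_y (tnth y i * tnth y j * f y)%:E = (i == j)%:R%:E)%E)].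

Definition gtilt (R : realType) (n : nat) (f : n.-tuple R -> R)
  (x : n.-tuple R) (v : R) (y : n.-tuple R) : R :=
  f y * expR (- (sqnorm (vsub x y) / (2 * v))).

Definition meanv (R : realType) (d : measure_display) (T : measurableType d)
  (P : probability T R) (n : nat) (X : T -> n.-tuple R) : n.-tuple R :=
  mktuple (fun i => fine (\int[P]_w (tnth (X w) i)%:E)%E).

From HB Require Import structures.
From mathcomp Require Import all_boot all_order all_algebra.
From mathcomp Require Import all_classical all_reals all_analysis.
From mathcomp Require Import measurable_realfun.
From mathcomp Require Import ring lra.
Import Order.TTheory GRing.Theory Num.Theory.
Local Open Scope classical_set_scope.
Local Open Scope ring_scope.

(* Write h y = |x - y|^2 and phi t = exp (- t / (2 v)), so that g = f (phi o h).
   As phi is nonincreasing, h and phi o h are negatively correlated under the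
   probability density f (Chebyshev's association inequality), which gives
   int h g <= (int h f) (int g) = (n + |x|^2) (int g) by isotropy; normalizing
   the density of X yields (i).  For (ii), |E X - x|^2 <= E |X - x|^2
   coordinatewise, and sqrt (n + |x|^2) <= sqrt n + |x|. *)

Lemma sqrtrD_le {R : rcfType} (a b : R) : 0 <= a -> 0 <= b ->
  Num.sqrt (a + b) <= Num.sqrt a + Num.sqrt b.
Proof.
move=> a0 b0; rewrite -ler_sqr ?nnegrE ?addr_ge0 ?sqrtr_ge0 //.
rewrite sqrrD !sqr_sqrtr ?addr_ge0 // -addrA lerD2l lerDr.
by rewrite mulrn_wge0 // mulr_ge0 ?sqrtr_ge0.
Qed.

Lemma ler_norm_1Dsqr {R : realDomainType} (t : R) : `|t| <= 1 + t ^+ 2.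
Proof.
by rewrite -real_normK ?num_real //; have := normr_ge0 t; nra.
Qed.

Lemma ge0_lty_integrable d (T : measurableType d) (R : realType)
    (mu : {measure set T -> \bar R}) (f : T -> R) :
  measurable_fun setT f -> (forall t, 0 <= f t) ->
  (\int[mu]_t (f t)%:E < +oo)%E -> mu.-integrable setT (fun t => (f t)%:E).
Proof.
move=> mf f0 f_fin; apply/integrableP; split; first exact/measurable_EFinP.
by under eq_integral do rewrite gee0_abs ?lee_fin //.
Qed.

Section euclidean.
Context {R : realType} {n : nat}.
Implicit Types x y : n.-tuple R.

Lemma sqnorm_vsub x y :
  sqnorm (vsub x y) = \sum_(i < n) (tnth x i - tnth y i) ^+ 2.
Proof. by apply: eq_bigr => i _; rewrite tnth_mktuple. Qed.

Lemma sqnorm_vsubC x y : sqnorm (vsub x y) = sqnorm (vsub y x).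
Proof.
by rewrite !sqnorm_vsub; apply: eq_bigr => i _; rewrite -sqrrN opprB.
Qed.

Lemma sqnorm_ge0 x : 0 <= sqnorm x.
Proof. by apply: sumr_ge0 => i _; exact: sqr_ge0. Qed.

Lemma sqr_tnth_vsub_le x y (i : 'I_n) :
  (tnth x i - tnth y i) ^+ 2 <= sqnorm (vsub x y).
Proof.
rewrite sqnorm_vsub (bigD1 i) //= lerDl.
by apply: sumr_ge0 => j _; exact: sqr_ge0.
Qed.

End euclidean.

Lemma measurable_sqnorm_vsub d (T : measurableType d) (R : realType) (n : nat)
    (F G : T -> n.-tuple R) :
  measurable_fun setT F -> measurable_fun setT G ->
  measurable_fun setT (fun t => sqnorm (vsub (F t) (G t))).
Proof.
move=> mF mG; under eq_fun do rewrite sqnorm_vsub.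
apply: measurable_sum => i; apply: measurable_funX.
by apply: measurable_funB; exact: measurableT_comp (measurable_tnth i) _.
Qed.

Section isotropic_moments.
Context {R : realType} {n : nat} {mu : {measure set (n.-tuple R) -> \bar R}}.
Context {f : n.-tuple R -> R}.
Hypothesis iso : isotropic mu f.
Local Open Scope ereal_scope.

Lemma isotropic_integrable : mu.-integrable setT (fun y => (f y)%:E).
Proof.
case: iso => mf f0 f1 _ _; apply: ge0_lty_integrable mf f0 _.
by rewrite f1 ltry.
Qed.

Lemma isotropic_sqr_sub_tnth (i : 'I_n) (a : R) :
  mu.-integrable setT (fun y => ((a - tnth y i) ^+ 2 * f y)%:E) /\
  \int[mu]_y ((a - tnth y i) ^+ 2 * f y)%:E = (1 + a ^+ 2)%:E.
Proof.
case: iso => _ _ f1 /(_ i) [y_int y0] /(_ i i) [yy_int]; rewrite eqxx => yy1.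
have f_int := isotropic_integrable.
have -> : (fun y => ((a - tnth y i) ^+ 2 * f y)%:E) = (fun y =>
    (tnth y i * tnth y i * f y)%:E + (- (2 * a))%:E * (tnth y i * f y)%:E
    + (a ^+ 2)%:E * (f y)%:E).
  by apply/funext => y; rewrite -!EFinM -!EFinD; congr (_%:E); ring.
have lin_int : mu.-integrable setT (fun y =>
    (tnth y i * tnth y i * f y)%:E + (- (2 * a))%:E * (tnth y i * f y)%:E).
  by apply: integrableD => //; exact: integrableZl.
split; first by apply: integrableD => //; exact: integrableZl.
rewrite integralD //; last exact: integrableZl.
rewrite integralD //; last exact: integrableZl.
by rewrite !integralZl // y0 yy1 f1 mule0 adde0 mule1.
Qed.

Lemma isotropic_second_moment x :
  mu.-integrable setT (fun y => (sqnorm (vsub x y) * f y)%:E) /\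
  \int[mu]_y (sqnorm (vsub x y) * f y)%:E = (n%:R + sqnorm x)%:E.
Proof.
pose F i y := ((tnth x i - tnth y i) ^+ 2 * f y)%:E.
have F_int i : mu.-integrable setT (F i).
  by case: (isotropic_sqr_sub_tnth i (tnth x i)).
have -> : (fun y => (sqnorm (vsub x y) * f y)%:E) =
    (fun y => \sum_(i < n) F i y).
  by apply/funext => y; rewrite sumEFin sqnorm_vsub mulr_suml.
split; first exact: integrable_sum.
rewrite integral_sum //.
under eq_bigr do rewrite (proj2 (isotropic_sqr_sub_tnth _ _)).
by rewrite sumEFin big_split /= sumr_const card_ord.
Qed.

End isotropic_moments.

Section integral_density.
Context {d} {T : measurableType d} {R : realType}.
Context {mu nu : {measure set T -> \bar R}} {g : T -> R}.
Hypotheses (mg : measurable_fun setT g) (g_ge0 : forall t, 0 <= g t).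
Hypothesis nuE :
  forall A, measurable A -> nu A = (\int[mu]_(t in A) (g t)%:E)%E.
Local Open Scope ereal_scope.
Import HBNNSimple.

Lemma integral_density_indic A : measurable A ->
  \int[mu]_t ((\1_A t)%:E * (g t)%:E) = nu A.
Proof.
move=> mA; rewrite nuE // (integral_mkcond A).
by apply: eq_integral => t _; rewrite epatch_indic muleC.
Qed.

Lemma integral_density_nnsfun (h : {nnsfun T >-> R}) :
  \int[mu]_t ((h t)%:E * (g t)%:E) = \int[nu]_t (h t)%:E.
Proof.
rewrite integralT_nnsfun sintegralE.
transitivity (\int[mu]_t \sum_(r \in range h)
    (r%:E * ((\1_(h @^-1` [set r]) t)%:E * (g t)%:E))).
  apply: eq_integral => t _; rewrite fimfunE -fsumEFin // ge0_mule_fsuml.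
    by apply: eq_fsbigr => r _; rewrite EFinM muleA.
  by move=> r; exact: nnfun_muleindic_ge0.
have mI r : measurable_fun setT
    (fun t => (\1_(h @^-1` [set r]) t)%:E * (g t)%:E).
  by apply: emeasurable_funM; exact/measurable_EFinP.
rewrite ge0_integral_fsum //.
- apply: eq_fsbigr => r /set_mem [t _ <-].
  by rewrite ge0_integralZl ?integral_density_indic ?lee_fin // => u _;
    rewrite mule_ge0 ?lee_fin.
- by move=> r; apply: emeasurable_funM.
- move=> r t _; rewrite muleA -!EFinM lee_fin mulr_ge0 //.
  by rewrite -lee_fin nnfun_muleindic_ge0.
Qed.

Lemma ge0_integral_density (F : T -> \bar R) : (forall t, 0 <= F t) ->
  measurable_fun setT F -> \int[mu]_t (F t * (g t)%:E) = \int[nu]_t F t.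
Proof.
(* Both sides are monotone limits along simple approximations of F, on which
   they agree by integral_density_nnsfun. *)
move=> F0 mF; pose h := nnsfun_approx measurableT mF.
have cvg_integral (m : {measure set T -> \bar R}) (w : T -> R) :
    measurable_fun setT w -> (forall t, (0 <= w t)%R) ->
    \int[m]_t ((h k t)%:E * (w t)%:E) @[k --> \oo] -->
    \int[m]_t (F t * (w t)%:E).
  move=> mw w0; rewrite [X in _ --> X](_ : _ =
      \int[m]_t limn (fun k => (h k t)%:E * (w t)%:E)).
    apply: cvg_monotone_convergence => //.
    - by move=> k; apply: emeasurable_funM; apply/measurable_EFinP.
    - by move=> k t _; rewrite -EFinM lee_fin mulr_ge0.
    - move=> t _ k l kl; rewrite lee_wpmul2r ?lee_fin //.
      exact/lefP/nd_nnsfun_approx.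
  apply: eq_integral => t _; apply/esym/cvg_lim => //.
  by apply: cvgeZr => //; exact: cvg_nnsfun_approx.
have := cvg_integral nu (cst 1%R) (measurable_cst _) (fun=> ler01).
under eq_fun do under eq_integral do rewrite mule1.
under eq_fun do rewrite -integral_density_nnsfun.
under [X in _ --> X]eq_integral do rewrite mule1.
exact/cvg_unique/cvg_integral.
Qed.

End integral_density.

Lemma ge0_integral_comp_density {d d'} {T : measurableType d}
    {U : measurableType d'} {R : realType} {P : {measure set T -> \bar R}}
    {mu : {measure set U -> \bar R}} {X : T -> U} {rho : U -> R} :
  measurable_fun setT X -> measurable_fun setT rho -> (forall y, 0 <= rho y) ->
  (forall A, measurable A ->
    P (X @^-1` A) = (\int[mu]_(y in A) (rho y)%:E)%E) ->
  forall F : U -> \bar R, (forall y, 0 <= F y)%E -> measurable_fun setT F ->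
  (\int[P]_w F (X w) = \int[mu]_y (F y * (rho y)%:E))%E.
Proof.
move=> mX mrho rho0 PXE F F0 mF.
rewrite (ge0_integral_density (nu := pushforward P X) mrho rho0 PXE) //.
by rewrite [RHS]ge0_integral_pushforward.
Qed.

Lemma le_integral_comp_density {d d'} {T : measurableType d}
    {U : measurableType d'} {R : realType} {P : probability T R}
    {mu : {measure set U -> \bar R}} {X : T -> U} {g : U -> R} (c : R)
    (F : U -> R) (m : R) :
  measurable_fun setT X -> measurable_fun setT g -> (forall y, 0 <= g y) ->
  0 < c -> (forall A, measurable A ->
    P (X @^-1` A) = (\int[mu]_(y in A) (c * g y)%:E)%E) ->
  measurable_fun setT F -> (forall y, 0 <= F y) ->
  (\int[mu]_y (F y * g y)%:E <= m%:E * \int[mu]_y (g y)%:E)%E ->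
  (\int[P]_w (F (X w))%:E <= m%:E)%E.
Proof.
move=> mX mg g0 c0 PXE mF F0 Fg_le.
have cg0 y : 0 <= c * g y := mulr_ge0 (ltW c0) (g0 y).
have cg_int1 : (c%:E * \int[mu]_y (g y)%:E = 1)%E.
  rewrite -(probability_setT P) -(preimage_setT X) PXE //.
  under [RHS]eq_integral do rewrite EFinM.
  rewrite ge0_integralZl ?lee_fin ?(ltW c0) //; first exact/measurable_EFinP.
  by move=> y _; rewrite lee_fin.
rewrite (ge0_integral_comp_density mX _ cg0 PXE (fun y => (F y)%:E)) //;
  [|exact: measurable_funM|exact/measurable_EFinP].
under eq_integral do rewrite -EFinM mulrCA EFinM.
rewrite ge0_integralZl ?lee_fin ?(ltW c0) //; first last.
- by move=> y _; rewrite lee_fin mulr_ge0.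
- exact/measurable_EFinP/measurable_funM.
by rewrite -[leRHS]mule1 -cg_int1 muleCA lee_wpmul2l ?lee_fin ?(ltW c0).
Qed.

Section chebyshev_association.
Context {d} {T : measurableType d} {R : realType}.
Context {mu : {measure set T -> \bar R}} {f h : T -> R} (phi : R -> R).
Hypotheses (mf : measurable_fun setT f) (f_ge0 : forall t, 0 <= f t).
Hypothesis f_int1 : (\int[mu]_t (f t)%:E = 1)%E.
Hypotheses (mh : measurable_fun setT h)
  (hf_int : mu.-integrable setT (fun t => (h t * f t)%:E)).
Hypotheses (phi_ni : nonincreasing_fun phi)
  (phi_h_le1 : forall t, `|phi (h t)| <= 1).
Local Open Scope ereal_scope.

Let f_int : mu.-integrable setT (fun t => (f t)%:E).
Proof. by apply: ge0_lty_integrable mf f_ge0 _; rewrite f_int1 ltry. Qed.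

Let mphih : measurable_fun setT (phi \o h).
Proof. exact: measurableT_comp (nonincreasing_measurable _ phi_ni) mh. Qed.

Let fphih_int : mu.-integrable setT (fun t => (f t * phi (h t))%:E).
Proof.
apply: le_integrable f_int => //; first exact/measurable_EFinP/measurable_funM.
move=> t _; rewrite !abse_EFin lee_fin normrM ger0_norm //.
by rewrite ler_piMr.
Qed.

Let hfphih_int : mu.-integrable setT (fun t => (h t * (f t * phi (h t)))%:E).
Proof.
apply: le_integrable hf_int => //.
  by apply/measurable_EFinP/measurable_funM => //; exact: measurable_funM.
move=> t _; rewrite !abse_EFin lee_fin mulrA normrM.
by rewrite ler_piMr.
Qed.

Lemma chebyshev_association :
  \int[mu]_t (h t * (f t * phi (h t)))%:E <=
  \int[mu]_t (h t * f t)%:E * \int[mu]_t (f t * phi (h t))%:E.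
Proof.
have hfE := fineK (integrable_fin_num measurableT hf_int).
set m := fine _ in hfE.
rewrite -hfE; set p := phi m.
(* With m the mean of h, f (m - h) (phi h - phi m) >= 0 pointwise, and
   int f = 1. *)
have pointwise t : (h t * (f t * phi (h t)) + p * m * f t <=
    m * (f t * phi (h t)) + p * (h t * f t))%R.
  rewrite -subr_ge0 [X in (0 <= X)%R](_ : _ =
      f t * ((m - h t) * (phi (h t) - p)))%R; last by ring.
  apply: mulr_ge0 => //; have [hm|mh'] := leP (h t) m.
    by apply: mulr_ge0; rewrite subr_ge0 // phi_ni.
  by apply: mulr_le0; rewrite subr_le0 ?phi_ni // ltW.
have lhs_int : mu.-integrable setT
    (fun t => (h t * (f t * phi (h t)))%:E + (p * m)%:E * (f t)%:E).
  by apply: integrableD => //; exact: integrableZl.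
have rhs_int : mu.-integrable setT
    (fun t => m%:E * (f t * phi (h t))%:E + p%:E * (h t * f t)%:E).
  by apply: integrableD => //; exact: integrableZl.
have := le_integral measurableT lhs_int rhs_int.
rewrite !integralD //; try exact: integrableZl.
rewrite !integralZl // -hfE f_int1.
rewrite mule1 -EFinM leeD2rE //; apply.
by move=> t _; rewrite -!EFinM -!EFinD lee_fin pointwise.
Qed.

End chebyshev_association.

Section mean_square.
Context d (T : measurableType d) (R : realType) (P : probability T R).
Local Open Scope ereal_scope.

Lemma sqr_mean_sub_le (Y : T -> R) (a : R) :
  P.-integrable setT (fun w => (Y w)%:E) ->
  P.-integrable setT (fun w => ((Y w - a) ^+ 2)%:E) ->
  ((fine (\int[P]_w (Y w)%:E) - a) ^+ 2)%:E <= \int[P]_w ((Y w - a) ^+ 2)%:E.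
Proof.
move=> Y_int Y2_int; set b := (fine _ - a)%R.
have YE : \int[P]_w (Y w)%:E = (b + a)%:E.
  by rewrite subrK fineK // integrable_fin_num.
have bY_int : P.-integrable setT (fun w => (2 * b * Y w)%:E).
  by under eq_fun do rewrite EFinM; exact: integrableZl.
(* [2 b Y - (2 b a + b ^ 2)] is the tangent of [(Y - a) ^ 2] at [Y = E Y]. *)
have <- : \int[P]_w ((2 * b * Y w)%:E - (2 * b * a + b ^+ 2)%:E) = (b ^+ 2)%:E.
  rewrite integralB_EFin //; last exact: finite_measure_integrable_cst.
  under eq_integral do rewrite EFinM.
  rewrite integralZl // YE integral_cst //= probability_setT mule1.
  by rewrite -EFinM -EFinB; congr (_%:E); ring.
apply: le_integral => //.
  by apply: integrableB => //; exact: finite_measure_integrable_cst.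
move=> w _; rewrite -EFinB lee_fin -subr_ge0.
by rewrite [X in (0 <= X)%R](_ : _ = (Y w - a - b) ^+ 2)%R ?sqr_ge0 //; ring.
Qed.

End mean_square.

Section random_vector.
Context {d} {T : measurableType d} {R : realType} {P : probability T R}.
Context {n : nat} {X : T -> n.-tuple R} {x : n.-tuple R}.
Hypothesis mX : measurable_fun setT X.
Local Open Scope ereal_scope.
Hypothesis sqnorm_fin : \int[P]_w (sqnorm (vsub (X w) x))%:E < +oo.

Let sqnorm_int : P.-integrable setT (fun w => (sqnorm (vsub (X w) x))%:E).
Proof.
apply: ge0_lty_integrable sqnorm_fin => [|w]; last exact: sqnorm_ge0.
exact: measurable_sqnorm_vsub.
Qed.

Let mXi i : measurable_fun setT (fun w => tnth (X w) i).
Proof. exact: measurableT_comp (measurable_tnth i) mX. Qed.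

Let sqr_sub_int i :
  P.-integrable setT (fun w => ((tnth (X w) i - tnth x i) ^+ 2)%:E).
Proof.
apply: le_integrable sqnorm_int => //.
  by apply/measurable_EFinP/measurable_funX; exact: measurable_funB.
move=> w _; rewrite !abse_EFin lee_fin !ger0_norm ?sqr_ge0 ?sqnorm_ge0 //.
exact: sqr_tnth_vsub_le.
Qed.

Lemma integrable_tnth i : P.-integrable setT (fun w => (tnth (X w) i)%:E).
Proof.
have bound_int := integrableD measurableT
  (finite_measure_integrable_cst P (1 + `|tnth x i|) measurableT) sqnorm_int.
apply: le_integrable bound_int => //; first exact/measurable_EFinP.
move=> w _; rewrite compE -EFinD !abse_EFin lee_fin [leRHS]ger0_norm;
  last by rewrite !addr_ge0 ?sqnorm_ge0.
have := ler_normD (tnth (X w) i - tnth x i)%R (tnth x i).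
rewrite subrK => /le_trans; apply; rewrite addrAC lerD2r.
by rewrite (le_trans (ler_norm_1Dsqr _)) // lerD2l sqr_tnth_vsub_le.
Qed.

Lemma sqnorm_meanv_sub_le :
  (sqnorm (vsub (meanv P X) x))%:E <= \int[P]_w (sqnorm (vsub (X w) x))%:E.
Proof.
rewrite sqnorm_vsub -sumEFin.
under eq_integral do rewrite sqnorm_vsub -sumEFin.
rewrite ge0_integral_sum //.
- apply: lee_sum => i _; rewrite tnth_mktuple.
  exact: sqr_mean_sub_le (integrable_tnth i) (sqr_sub_int i).
- by move=> i; apply/measurable_EFinP/measurable_funX; exact: measurable_funB.
- by move=> i w _; rewrite lee_fin sqr_ge0.
Qed.

End random_vector.

Lemma measurable_gtilt (R : realType) (n : nat) (f : n.-tuple R -> R)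
    (x : n.-tuple R) (v : R) :
  measurable_fun setT f -> measurable_fun setT (gtilt f x v).
Proof.
move=> mf; apply: measurable_funM => //; apply: measurableT_comp => //.
apply: measurableT_comp => //; apply: measurable_funM => //.
exact: measurable_sqnorm_vsub.
Qed.

Lemma gtilt_second_moment_le (R : realType) (n : nat)
    (mu : {measure set (n.-tuple R) -> \bar R}) (f : n.-tuple R -> R)
    (x : n.-tuple R) (v : R) :
  isotropic mu f -> 0 < v ->
  (\int[mu]_y (sqnorm (vsub x y) * gtilt f x v y)%:E <=
   (n%:R + sqnorm x)%:E * \int[mu]_y (gtilt f x v y)%:E)%E.
Proof.
move=> iso v0; have [hf_int <-] := isotropic_second_moment iso x.
have [mf f0 f1 _ _] := iso.
apply: (@chebyshev_association _ _ _ mu f (fun y => sqnorm (vsub x y))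
  (fun t => expR (- (t / (2 * v))))) => //.
- exact: measurable_sqnorm_vsub.
- by move=> s t st; rewrite ler_expR lerN2 ler_pM2r // invr_gt0 mulr_gt0.
- move=> y; rewrite ger0_norm ?expR_ge0 // expR_le1 oppr_le0.
  by rewrite divr_ge0 ?sqnorm_ge0 // mulr_ge0 // ltW.
Qed.

Theorem corollary2p6 (R : realType) (n : nat)
  (mu : {measure set (n.-tuple R) -> \bar R})
  (f : n.-tuple R -> R) (x : n.-tuple R) (v : R)
  (d : measure_display) (T : measurableType d) (P : probability T R)
  (X : T -> n.-tuple R) :
  (0 < n)%N ->
  is_lebesgue_measure mu ->
  isotropic mu f ->
  0 < v ->
  measurable_fun setT X ->
  (* X has density proportional to g = gtilt f x v (w.r.t. Lebesgue) *)
  (exists2 c : R, 0 < c & forall A : set (n.-tuple R), measurable A ->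
      P (X @^-1` A) = (\int[mu]_(y in A) (c * gtilt f x v y)%:E)%E) ->
  [/\ (forall i : 'I_n, P.-integrable setT (fun w => (tnth (X w) i)%:E)),
      (\int[P]_w (sqnorm (vsub (X w) x))%:E <= (n%:R + sqnorm x)%:E)%E &
      enorm (vsub (meanv P X) x) <= Num.sqrt n%:R + enorm x].
Proof.
move=> _ _ iso v0 mX [c c0 PXE].
have [mf f0 _ _ _] := iso.
have sqnorm_le :
    (\int[P]_w (sqnorm (vsub (X w) x))%:E <= (n%:R + sqnorm x)%:E)%E.
  under eq_integral do rewrite sqnorm_vsubC.
  apply: (le_integral_comp_density c (fun y => sqnorm (vsub x y)) _ mX _ _ c0
    PXE).
  - exact: measurable_gtilt.
  - by move=> y; rewrite mulr_ge0 ?expR_ge0.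
  - exact: measurable_sqnorm_vsub.
  - by move=> y; exact: sqnorm_ge0.
  - exact: gtilt_second_moment_le.
have sqnorm_fin := le_lt_trans sqnorm_le (ltry _).
split => //; first exact: integrable_tnth mX sqnorm_fin.
rewrite /enorm (le_trans _ (sqrtrD_le _ _ (ler0n _ n) (sqnorm_ge0 x))) //.
rewrite ler_wsqrtr //.
by rewrite -lee_fin (le_trans (sqnorm_meanv_sub_le mX sqnorm_fin)).
Qed.
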